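(* Fix $\epsilon>0$. For all $f\in\mathcal{F}_k$ and all $u\in\mathbb{R}^k$, $\hat\Psi(u)\subseteq\Psi^f(u)$.
   Context: $[k]=\{1,\dots,k\}$, $\mathcal{Y}=\{-1,1\}^k$, $\mathcal{V}=\{-1,0,1\}^k$, $\Delta_\mathcal{Y}$ the distributions on $\mathcal{Y}$. $u\odot u'$ entrywise product, $\mathbbm{1}$ all-ones, $(x)_+$ entrywise positive part; $\boxed{u}=\mathrm{sign}(u)\odot\min(|u|,\mathbbm{1})$ is the entrywise clipping of $u$ to $[-1,1]^k$. For $A\subseteq\mathbb{R}^k$, $d_\infty(A,u)=\inf_{a\in A}\|a-u\|_\infty$. For a permutation $\pi$ of $[k]$ and $i\in\{0,\dots,k\}$, $\mathbbm{1}_{\pi,i}$ is the indicator vector of $\{\pi_1,\dots,\pi_i\}$; $V_{\pi,y}=\{\mathbbm{1}_{\pi,i}\odot y: i=0,\dots,k\}$; $\mathcal{V}^{\text{face}}=\bigcup_{\pi,y\in\mathcal{Y}}2^{V_{\pi,y}}$. $\mathcal{F}_k$: submodular, increasing, normalized set functions $f:2^{[k]}\to\mathbb{R}$. Lovász extension $F(x)=\max_\pi\sum_{i}x_{\pi_i}(f(\{\pi_1,..,\pi_i\})-f(\{\pi_1,..,\pi_{i-1}\}))$; Lovász hinge $L^f(u,y)=F((\mathbbm{1}-u\odot y)_+)$; $L^f(u;p)=\sum_yp_yL^f(u,y)$. Define $\hat\Psi(u)=\bigcap\{V\in\mathcal{V}^{\text{face}}: d_\infty(\mathrm{conv}\,V,\boxed{u})<\epsilon\}$.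 Let $\mathcal{U}^f=\{\arg\min_{u'\in\mathbb{R}^k}L^f(u';p): p\in\Delta_\mathcal{Y}\}$ and $\Psi^f(u)=\mathcal{V}\cap\bigcap\{U\in\mathcal{U}^f: d_\infty(U,u)<\epsilon\}$ (an empty intersection of subsets of $\mathbb{R}^k$ is $\mathbb{R}^k$). *)

From HB Require Import structures.
From mathcomp Require Import all_boot all_order all_algebra.
From mathcomp Require Import fingroup perm.
From mathcomp Require Import boolp classical_sets reals.
Set Implicit Arguments. Unset Strict Implicit. Unset Printing Implicit Defensive.
Import Order.TTheory GRing.Theory Num.Theory.
Local Open Scope ring_scope.
Local Open Scope classical_set_scope.

Section Defs.
Variable R : realType.
Variable k : nat.

Definition vec := 'I_k -> R.
(* Y = {-1,1}^k, encoded by boolean vectors *)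
Definition signvec := {ffun 'I_k -> bool}.
Definition yvec (b : signvec) : vec := fun i => if b i then 1 else -1.
Definition emul (u v : vec) : vec := fun i => u i * v i.
Definition supnorm (u : vec) : R := \big[Num.max/0]_(i < k) `|u i|.
Definition dinf_lt (A : set vec) (u : vec) (eps : R) : Prop :=
  exists2 a, A a & supnorm (fun i => a i - u i) < eps.
Definition clip (u : vec) : vec := fun i => Num.sg (u i) * Num.min `|u i| 1.
Definition Vset : set vec := [set v | forall i, v i = -1 \/ v i = 0 \/ v i = 1].
(* indicator of {pi_1,...,pi_i} (0-based: {pi 0, ..., pi (i-1)}) *)
Definition ind (pi : {perm 'I_k}) (i : 'I_k.+1) : vec :=
  fun j => if (nat_of_ord ((pi^-1)%g j) < i)%N then 1 else 0.
Definition Vpy (pi : {perm 'I_k}) (b : signvec) : set vec :=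
  [set v | exists i : 'I_k.+1, v = emul (ind pi i) (yvec b)].
Definition Vface : set (set vec) :=
  [set V | exists (pi : {perm 'I_k}) (b : signvec), V `<=` Vpy pi b].
Definition conv (A : set vec) : set vec :=
  [set x | exists n (a : 'I_n -> vec) (l : 'I_n -> R),
     [/\ forall j, A (a j), forall j, 0 <= l j, \sum_(j < n) l j = 1 &
         x = fun i => \sum_(j < n) l j * a j i]].
Definition Psihat (eps : R) (u : vec) : set vec :=
  \bigcap_(V in [set V | Vface V /\ dinf_lt (conv V) (clip u) eps]) V.

Definition submodular (f : {set 'I_k} -> R) : Prop :=
  forall A B, f (A :|: B) + f (A :&: B) <= f A + f B.
Definition increasing (f : {set 'I_k} -> R) : Prop :=
  forall A B : {set 'I_k}, A \subset B -> f A <= f B.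
Definition normalized (f : {set 'I_k} -> R) : Prop := f finset.set0 = 0.
Definition inFk (f : {set 'I_k} -> R) : Prop :=
  [/\ submodular f, increasing f & normalized f].

Definition prefix (pi : {perm 'I_k}) (i : nat) : {set 'I_k} :=
  [set pi j | j : 'I_k & (nat_of_ord j < i)%N].
Definition lovasz_term (f : {set 'I_k} -> R) (x : vec) (pi : {perm 'I_k}) : R :=
  \sum_(i < k) x (pi i) * (f (prefix pi i.+1) - f (prefix pi i)).
Definition lovasz (f : {set 'I_k} -> R) (x : vec) : R :=
  \big[Num.max/lovasz_term f x 1%g]_(pi : {perm 'I_k}) lovasz_term f x pi.
Definition lovasz_hinge (f : {set 'I_k} -> R) (u : vec) (b : signvec) : R :=
  lovasz f (fun i => Num.max (1 - u i * yvec b i) 0).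
Definition distrY (p : {ffun signvec -> R}) : Prop :=
  (forall y, 0 <= p y) /\ \sum_y p y = 1.
Definition Lexp (f : {set 'I_k} -> R) (u : vec) (p : {ffun signvec -> R}) : R :=
  \sum_y p y * lovasz_hinge f u y.
Definition argminL (f : {set 'I_k} -> R) (p : {ffun signvec -> R}) : set vec :=
  [set u | forall u', Lexp f u p <= Lexp f u' p].
Definition Uf (f : {set 'I_k} -> R) : set (set vec) :=
  [set U | exists p, distrY p /\ U = argminL f p].
Definition Psif (eps : R) (f : {set 'I_k} -> R) (u : vec) : set vec :=
  Vset `&` \bigcap_(U in [set U | Uf f U /\ dinf_lt U u eps]) U.
End Defs.

(* A point w of the cube [-1,1]^k is a convex combination of the vertices of a single
   face V_{pi,y}: sort |w| decreasingly and take as weights the gaps between consecutive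
   sorted values.  On such a face the Lovász hinge is affine, because for each label the
   hinge at every vertex is a sum of two indicator vectors that are initial segments of
   one common ordering, on which the Lovász extension is just f.
   If v lies in Psihat(u), it is a vertex with positive weight in the face decomposition
   of any such w that is eps-close to clip u; with w = clip u this gives v in V.  If
   U = argmin L^f(.;p) contains a point a eps-close to u, then w = clip a is still a
   minimiser (clipping does not increase the hinge) and is eps-close to clip u (clipping
   is 1-Lipschitz).  A convex combination of values >= min L that is <= min L puts
   positive weight only on minimisers, so by affinity v is in U. *)

From Pilot Require Import Defs.
From HB Require Import structures.
From mathcomp Require Import all_boot all_order all_algebra.
From mathcomp Require Import fingroup perm.
From mathcomp Require Import boolp classical_sets reals.
(* Give the finite-set names (set0, setP, subsetP, ...) precedence over classical_sets. *)
From mathcomp Require Import fintype finset.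
From mathcomp Require Import ring lra zify.
Import Order.TTheory GRing.Theory Num.Theory.
Set Implicit Arguments.
Unset Strict Implicit.
Unset Printing Implicit Defensive.

Local Open Scope ring_scope.

(* [prefix] is otherwise seq.prefix. *)
Local Notation prefix := Pilot.Defs.prefix.

Lemma exists_perm_sort (d : Order.disp_t) (T : orderType d) (k : nat)
    (h : 'I_k -> T) :
  exists r : {perm 'I_k}, forall a b, (r a <= r b)%N -> (h a <= h b)%O.
Proof.
pose prec a b := (h a < h b)%O || (h a == h b) && (a < b)%N.
have prec_irr a : ~~ prec a a by rewrite /prec ltxx ltnn andbF.
have prec_trans b a c : prec a b -> prec b c -> prec a c.
  rewrite /prec => /orP[hab|/andP[/eqP eab ab]] /orP[hbc|/andP[/eqP ebc bc]].
  - by rewrite (lt_trans hab hbc).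
  - by rewrite -ebc hab.
  - by rewrite eab hbc.
  - by rewrite eab ebc eqxx (ltn_trans ab bc) orbT.
pose rank a := #|[set c | prec c a]|.
have rank_lt a b : prec a b -> (rank a < rank b)%N.
  move=> ab; apply: proper_card; apply/properP; split; last by exists a; rewrite !inE.
  by apply/subsetP => c; rewrite !inE => /prec_trans; apply.
have rank_ord a : (rank a < k)%N.
  rewrite -[k]card_ord; apply: proper_card; apply/properP; split.
    exact/subsetP.
  by exists a; rewrite ?inE.
have prec_total a b : a != b -> prec a b || prec b a.
  rewrite /prec neq_ltn eq_sym; case: ltgtP => //= -> /orP[] ->; rewrite ?orbT //.
have rank_inj : injective (fun a => Ordinal (rank_ord a)).
  move=> a b [eq_ab]; apply/eqP; apply: contraT => /prec_total.
  by case/orP=> /rank_lt; rewrite eq_ab ltnn.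
exists (perm rank_inj) => a b; rewrite !permE /= leqNgt; apply: contraR.
by rewrite -ltNge => hba; apply: rank_lt; rewrite /prec hba.
Qed.

Lemma telescope_sum_ge (V : zmodType) (g : nat -> V) n m : (m <= n.+1)%N ->
  \sum_(i < n.+1 | (m <= i)%N) (g i - g i.+1) = g m - g n.+1.
Proof.
move=> le_mn; rewrite -(big_mkord (fun i => m <= i)%N (fun i => g i - g i.+1)).
rewrite (big_cat_nat (leq0n m) le_mn) /= big_nat_cond big_pred0 ?add0r; last first.
  by move=> i; rewrite andbC; case: ltnP.
have -> : \sum_(m <= i < n.+1 | (m <= i)%N) (g i - g i.+1)
          = \sum_(m <= i < n.+1) (g i - g i.+1).
  rewrite big_nat_cond [in RHS]big_nat_cond; apply: eq_bigl => i.
  by case: (m <= i)%N; rewrite ?andbF.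
rewrite (telescope_sumr_eq (fun i => - g i)) //; first by rewrite opprK addrC.
by move=> i _; rewrite opprK addrC.
Qed.

Section LovaszExtension.
Context {R : realType} {k : nat}.
Variable f : {set 'I_k} -> R.
Implicit Types (rho : {perm 'I_k}) (A B T : {set 'I_k}) (x y : vec R k).

Definition indicator T : vec R k := fun j => if j \in T then 1 else 0.

Lemma mem_prefix rho n j : (j \in prefix rho n) = ((rho^-1)%g j < n)%N.
Proof.
apply/imsetP/idP => [[i]|lt_j]; first by rewrite inE => lt_i ->; rewrite permK.
by exists ((rho^-1)%g j); rewrite ?inE ?permKV.
Qed.

Lemma prefix0 rho : prefix rho 0 = set0.
Proof. by apply/setP => j; rewrite mem_prefix inE. Qed.

Lemma prefix_full rho : prefix rho k = setT.
Proof. by apply/setP => j; rewrite mem_prefix inE ltn_ord. Qed.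

Lemma prefixS rho (i : 'I_k) : prefix rho i.+1 = rho i |: prefix rho i.
Proof.
apply/setP => j; rewrite !inE !mem_prefix ltnS leq_eqVlt.
by rewrite -(inj_eq (@perm_inj _ (rho^-1)%g)) permK -val_eqE.
Qed.

Lemma prefixSI rho (i : 'I_k) T :
  rho i \notin T -> prefix rho i.+1 :&: T = prefix rho i :&: T.
Proof.
move=> iNT; apply/setP => j; rewrite !inE prefixS !inE.
by case: eqP => [->|]; rewrite ?(negbTE iNT) ?andbF.
Qed.

Lemma telescope_prefixI rho T :
  \sum_(i < k) (f (prefix rho i.+1 :&: T) - f (prefix rho i :&: T)) = f T - f set0.
Proof.
rewrite -(big_mkord xpredT (fun i => f (prefix rho i.+1 :&: T) - f (prefix rho i :&: T))).
by rewrite telescope_sumr // prefix_full prefix0 setTI set0I.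
Qed.

Lemma lovasz_term_indicator_le rho T :
  submodular f -> normalized f -> lovasz_term f (indicator T) rho <= f T.
Proof.
move=> f_sub f0; rewrite -[f T]subr0 -f0 -(telescope_prefixI rho).
apply: ler_sum => i _; rewrite /indicator; case: ifPn => [iT|iNT]; last first.
  by rewrite prefixSI // mul0r subrr.
have eU : prefix rho i :|: prefix rho i.+1 :&: T = prefix rho i.+1.
  apply/setP => j; rewrite prefixS !inE.
  by case: eqP => [->|_]; rewrite ?iT ?orbT //=; case: (j \in _).
have eI : prefix rho i :&: (prefix rho i.+1 :&: T) = prefix rho i :&: T.
  by apply/setP => j; rewrite prefixS !inE; case: (j \in prefix rho i); rewrite ?orbT.
have := f_sub (prefix rho i) (prefix rho i.+1 :&: T); rewrite eU eI mul1r; lra.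
Qed.

Definition downclosed rho T := forall a b : 'I_k, (a <= b)%N -> rho b \in T -> rho a \in T.

Lemma lovasz_term_indicator_downclosed rho T :
  normalized f -> downclosed rho T -> lovasz_term f (indicator T) rho = f T.
Proof.
move=> f0 T_down; rewrite -[f T]subr0 -f0 -(telescope_prefixI rho).
apply: eq_bigr => i _; rewrite /indicator; case: ifPn => [iT|iNT]; last first.
  by rewrite prefixSI // mul0r subrr.
have prefix_sub : prefix rho i.+1 \subset T.
  apply/subsetP => j; rewrite mem_prefix ltnS => le_ji.
  by rewrite -(permKV rho j); apply: T_down le_ji iT.
rewrite mul1r !(setIidPl _) //; apply: subset_trans prefix_sub.
by rewrite prefixS subsetUr.
Qed.

Lemma lovasz_term_sum rho n (c : 'I_n -> R) (x : 'I_n -> vec R k) :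
  lovasz_term f (fun j => \sum_(l < n) c l * x l j) rho
  = \sum_(l < n) c l * lovasz_term f (x l) rho.
Proof.
rewrite /lovasz_term; under eq_bigr do rewrite mulr_suml.
rewrite exchange_big; apply: eq_bigr => l _.
by rewrite mulr_sumr; apply: eq_bigr => i _; rewrite mulrA.
Qed.

Lemma lovasz_termD rho x y :
  lovasz_term f (fun j => x j + y j) rho = lovasz_term f x rho + lovasz_term f y rho.
Proof. by rewrite /lovasz_term -big_split; apply: eq_bigr => i _; rewrite mulrDl. Qed.

Lemma lovasz_term_le_lovasz rho x : lovasz_term f x rho <= lovasz f x.
Proof. exact: le_bigmax. Qed.

Lemma lovasz_le x c : (forall rho, lovasz_term f x rho <= c) -> lovasz f x <= c.
Proof. by move=> le_c; apply/bigmax_leP. Qed.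

Lemma lovasz_le_homo x y :
  increasing f -> (forall j, x j <= y j) -> lovasz f x <= lovasz f y.
Proof.
move=> f_incr le_xy; apply: lovasz_le => rho.
apply: le_trans (lovasz_term_le_lovasz rho y); apply: ler_sum => i _.
by apply: ler_wpM2r => //; rewrite subr_ge0; apply: f_incr; rewrite prefixS subsetUr.
Qed.

Lemma lovasz_indicatorD_le A B : submodular f -> normalized f ->
  lovasz f (fun j => indicator A j + indicator B j) <= f A + f B.
Proof.
move=> f_sub f0; apply: lovasz_le => rho; rewrite lovasz_termD.
by apply: lerD; apply: lovasz_term_indicator_le.
Qed.

Lemma lovasz_term_sublevel (key : 'I_k -> nat) : normalized f ->
  exists rho, forall m, let T := [set j | (key j < m)%N] in
    lovasz_term f (indicator T) rho = f T.
Proof.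
move=> f0; have [r r_sorts] := exists_perm_sort key.
exists (r^-1)%g => m; apply: lovasz_term_indicator_downclosed => // a b le_ab.
rewrite !inE; apply: leq_ltn_trans; apply: r_sorts.
by rewrite !permKV.
Qed.
End LovaszExtension.

Section CubeFaces.
Context {R : realType} {k : nat}.
Implicit Types (pi : {perm 'I_k}) (b : signvec k) (w : vec R k).

Definition face_vertex pi b (i : 'I_k.+1) : vec R k := emul (ind R pi i) (yvec R b).

Lemma face_vertexE pi b i j :
  face_vertex pi b i j = if ((pi^-1)%g j < i)%N then yvec R b j else 0.
Proof. by rewrite /face_vertex /emul /ind; case: ifP; rewrite ?mul1r ?mul0r. Qed.

Lemma face_vertex_Vset pi b i : Vset (face_vertex pi b i).
Proof. by move=> j; rewrite face_vertexE /yvec; case: ifP; case: (b j); auto. Qed.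

Lemma cube_face_decomposition w : (forall j, `|w j| <= 1) ->
  exists pi b (lam : 'I_k.+1 -> R), [/\ forall i, 0 <= lam i, \sum_i lam i = 1 &
    w = fun j => \sum_i lam i * face_vertex pi b i j].
Proof.
move=> w_le1; have [r r_sorts] := exists_perm_sort (fun j => - `|w j|).
(* [g n.+1] is the value of [|w|] at rank [n] in decreasing order; the weights are
   the gaps [g i - g i.+1]. *)
pose g n := if n is n'.+1 then \big[Num.max/0]_(j | (n' <= r j)%N) `|w j| else 1.
have g_last : g k.+1 = 0 by rewrite /= big_pred0 // => j; rewrite leqNgt ltn_ord.
have g_rank j : g (r j).+1 = `|w j|.
  apply/le_anti; rewrite (le_bigmax_cond _ _ (leqnn _)) andbT.
  by apply/bigmax_leP; split => // j' /r_sorts; rewrite lerN2.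
have g_homo n : g n.+1 <= g n.
  case: n => [|n]; first by apply/bigmax_leP.
  apply/bigmax_leP; split=> [|j le_nj]; first exact: bigmax_ge_id.
  exact/le_bigmax_cond/ltnW.
pose b := [ffun j => 0 <= w j].
exists (r^-1)%g, b, (fun i : 'I_k.+1 => g i - g i.+1); split.
- by move=> i; rewrite subr_ge0.
- by have := telescope_sum_ge g (leq0n k.+1); rewrite g_last subr0.
apply: funext => j.
have -> : \sum_(i < k.+1) (g i - g i.+1) * face_vertex (r^-1)%g b i j
        = \sum_(i < k.+1 | ((r j).+1 <= i)%N) (g i - g i.+1) * yvec R b j.
  rewrite [RHS]big_mkcond; apply: eq_bigr => i _.
  by rewrite face_vertexE invgK; case: ifP; rewrite ?mulr0.
rewrite -mulr_suml telescope_sum_ge; last by rewrite ltnS ltnW.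
rewrite g_rank g_last subr0 /yvec ffunE.
case: ifPn => [/ger0_norm->|]; first by rewrite mulr1.
by rewrite -ltNge => /ltr0_norm->; rewrite mulrN1 opprK.
Qed.

Lemma face_vertex_mul_le1 pi b b' i j : face_vertex pi b i j * yvec R b' j <= 1.
Proof. by rewrite face_vertexE /yvec; case: ifP; case: (b j); case: (b' j); lra. Qed.

(* Coordinates where [b] and [b'] disagree come first, in [pi]-order, then the others
   in reverse [pi]-order: the hinge at every vertex of the face is a sum of indicators
   of sublevel sets of this single key (face_vertex_hinge), so one permutation is
   optimal for all of them in the Lovász extension. *)
Definition face_key pi b b' (j : 'I_k) : nat :=
  if b j != b' j then nat_of_ord ((pi^-1)%g j) else (2 * k - (pi^-1)%g j)%N.

Lemma face_vertex_hinge pi b b' (i : 'I_k.+1) j :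
  1 - face_vertex pi b i j * yvec R b' j =
  indicator [set j | (face_key pi b b' j < (2 * k - i).+1)%N] j
  + indicator [set j | (face_key pi b b' j < i)%N] j.
Proof.
rewrite face_vertexE /indicator !inE /face_key /yvec.
have := ltn_ord ((pi^-1)%g j); have := ltn_ord i.
by case: (b j); case: (b' j) => /= lt_i lt_p; repeat case: ifP => ?; try lia; lra.
Qed.

Lemma lovasz_hinge_face_le f pi b b' (lam : 'I_k.+1 -> R) :
  submodular f -> normalized f -> (forall i, 0 <= lam i) -> \sum_i lam i = 1 ->
  \sum_i lam i * lovasz_hinge f (face_vertex pi b i) b'
  <= lovasz_hinge f (fun j => \sum_i lam i * face_vertex pi b i j) b'.
Proof.
move=> f_sub f0 lam_ge0 lam_sum1; rewrite /lovasz_hinge.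
set key := face_key pi b b'.
pose hinge (i : 'I_k.+1) j : R := indicator [set j | (key j < (2 * k - i).+1)%N] j
                + indicator [set j | (key j < i)%N] j.
have vertex_hinge i : (fun j => Num.max (1 - face_vertex pi b i j * yvec R b' j) 0) = hinge i.
  by apply: funext => j; rewrite max_l ?subr_ge0 ?face_vertex_mul_le1 ?face_vertex_hinge.
have comb_hinge : (fun j => Num.max (1 - (\sum_i lam i * face_vertex pi b i j) * yvec R b' j) 0)
                = (fun j => \sum_i lam i * hinge i j).
  apply: funext => j.
  have -> : 1 - (\sum_i lam i * face_vertex pi b i j) * yvec R b' j
            = \sum_i lam i * (1 - face_vertex pi b i j * yvec R b' j).
    by rewrite -{1}lam_sum1 mulr_suml -sumrB; apply: eq_bigr => i _; ring.
  rewrite max_l; first by apply: eq_bigr => i _; rewrite face_vertex_hinge.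
  by apply: sumr_ge0 => i _; rewrite mulr_ge0 // subr_ge0 face_vertex_mul_le1.
have [rho rhoE] := lovasz_term_sublevel key f0.
rewrite comb_hinge; under eq_bigr do rewrite vertex_hinge.
apply: le_trans (lovasz_term_le_lovasz f rho _); rewrite lovasz_term_sum.
apply: ler_sum => i _; apply: ler_wpM2l => //.
by rewrite lovasz_termD !rhoE; apply: lovasz_indicatorD_le.
Qed.

Lemma Lexp_face_le f (p : {ffun signvec k -> R}) pi b (lam : 'I_k.+1 -> R) :
  submodular f -> normalized f -> (forall y, 0 <= p y) ->
  (forall i, 0 <= lam i) -> \sum_i lam i = 1 ->
  \sum_i lam i * Lexp f (face_vertex pi b i) p
  <= Lexp f (fun j => \sum_i lam i * face_vertex pi b i j) p.
Proof.
move=> f_sub f0 p_ge0 lam_ge0 lam_sum1; rewrite /Lexp.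
under eq_bigr do rewrite mulr_sumr.
rewrite exchange_big; apply: ler_sum => y _.
under eq_bigr do rewrite mulrCA.
by rewrite -mulr_sumr ler_wpM2l // lovasz_hinge_face_le.
Qed.

Definition face_support pi b (lam : 'I_k.+1 -> R) : set (vec R k) :=
  [set x | exists2 i, 0 < lam i & x = face_vertex pi b i].

Lemma face_support_Vface pi b lam : Vface (face_support pi b lam).
Proof. by exists pi, b => _ [i _ ->]; exists i. Qed.

Lemma face_support_conv pi b lam : (forall i, 0 <= lam i) -> \sum_i lam i = 1 ->
  conv (face_support pi b lam) (fun j => \sum_i lam i * face_vertex pi b i j).
Proof.
move=> lam_ge0 lam_sum1.
have [i0 lam_i0] : exists i0, 0 < lam i0.
  apply/existsP; apply: contraT; rewrite negb_exists => /forallP lam_le0.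
  move: lam_sum1; rewrite big1 => [/eqP|i _]; first by rewrite eq_sym oner_eq0.
  by apply/eqP; rewrite eq_le lam_ge0 andbT leNgt lam_le0.
pose a i := face_vertex pi b (if 0 < lam i then i else i0).
exists k.+1, a, lam; split => //.
  by move=> i; rewrite /a; case: ifP => lam_i; [exists i | exists i0].
apply: funext => j; apply: eq_bigr => i _; rewrite /a; case: ifPn => // lam_i.
have lam0 : lam i = 0 by apply/eqP; rewrite eq_le lam_ge0 andbT leNgt.
by rewrite lam0 !mul0r.
Qed.
End CubeFaces.

Section Clipping.
Context {R : realType} {k : nat}.
Implicit Types (u a : vec R k) (x : R).

Lemma clip_cases x : let c := Num.sg x * Num.min `|x| 1 in
  [\/ x <= -1 /\ c = -1, -1 <= x <= 1 /\ c = x | 1 <= x /\ c = 1].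
Proof.
rewrite /=; case: (ltrgt0P x) => [x_gt0|x_lt0|->].
- rewrite gtr0_sg // mul1r; case: (leP x 1) => x_le.
    by apply: Or32; split; lra.
  by apply: Or33; split; lra.
- rewrite ltr0_sg // mulN1r; case: (leP (- x) 1) => x_ge.
    by apply: Or32; split; lra.
  by apply: Or31; split; lra.
- by apply: Or32; rewrite sgr0 mul0r; split; lra.
Qed.

Lemma norm_clip_le1 u j : `|clip u j| <= 1.
Proof. by rewrite /clip ler_norml; case: (clip_cases (u j)) => -[? ->]; lra. Qed.

Lemma clip_lipschitz a u j : `|clip a j - clip u j| <= `|a j - u j|.
Proof.
rewrite /clip ler_norml; have := lexx `|a j - u j|; rewrite ler_norml.
by case: (clip_cases (a j)) => -[? ->]; case: (clip_cases (u j)) => -[? ->]; lra.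
Qed.

Lemma hinge_clip_le (b : signvec k) a j :
  Num.max (1 - clip a j * yvec R b j) 0 <= Num.max (1 - a j * yvec R b j) 0.
Proof.
rewrite /clip /yvec ge_max !le_max lexx orbT andbT.
by case: (b j); case: (clip_cases (a j)) => -[? ->]; apply/orP;
  [left|left|right|right|left|left]; lra.
Qed.

Lemma Lexp_clip_le f (p : {ffun signvec k -> R}) a :
  increasing f -> (forall y, 0 <= p y) -> Lexp f (clip a) p <= Lexp f a p.
Proof.
move=> f_incr p_ge0; apply: ler_sum => y _; rewrite ler_wpM2l //.
exact: lovasz_le_homo f_incr (hinge_clip_le y a).
Qed.

Lemma supnorm_le (x y : vec R k) : (forall j, `|x j| <= `|y j|) -> supnorm x <= supnorm y.
Proof. by move=> le_xy; apply: le_bigmax2. Qed.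

Lemma supnorm_eq0 (x : vec R k) : (forall j, x j = 0) -> supnorm x = 0.
Proof. by move=> x0; apply: bigmax_eq_id => j _; rewrite x0 normr0. Qed.
End Clipping.

Lemma convex_comb_le_lb (R : numDomainType) n (lam x : 'I_n -> R) m :
  (forall i, 0 <= lam i) -> \sum_i lam i = 1 -> (forall i, m <= x i) ->
  \sum_i lam i * x i <= m -> forall i, 0 < lam i -> x i = m.
Proof.
move=> lam_ge0 lam_sum1 m_le_x comb_le i lam_i.
have term_ge0 j : 0 <= lam j * (x j - m) by rewrite mulr_ge0 // subr_ge0.
have sum0 : \sum_j lam j * (x j - m) = 0.
  apply/eqP; rewrite eq_le sumr_ge0 // andbT.
  under eq_bigr do rewrite mulrBr.
  by rewrite sumrB -mulr_suml lam_sum1 mul1r subr_le0.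
have := psumr_eq0P (fun j _ => term_ge0 j) sum0 (i := i) isT; move/eqP.
by rewrite mulf_eq0 (gt_eqF lam_i) subr_eq0 => /eqP.
Qed.

Local Open Scope classical_set_scope.

Lemma Psihat_face_vertex (R : realType) (k : nat) (eps : R) (u v w : vec R k) :
  Psihat eps u v -> (forall j, `|w j| <= 1) ->
  supnorm (fun j => w j - clip u j) < eps ->
  exists pi b (lam : 'I_k.+1 -> R),
    [/\ forall i, 0 <= lam i, \sum_i lam i = 1,
        w = (fun j => \sum_i lam i * face_vertex pi b i j)
      & exists2 i, 0 < lam i & v = face_vertex pi b i].
Proof.
move=> v_hat w_le1 w_near.
have [pi [b [lam [lam_ge0 lam_sum1 wE]]]] := cube_face_decomposition w_le1.
exists pi, b, lam; split => //; apply: (v_hat (face_support pi b lam)).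
split; first exact: face_support_Vface.
by exists w; rewrite // {1}wE; apply: face_support_conv.
Qed.

Unset Implicit Arguments.

Theorem proposition2 (R : realType) (eps : R) (heps : 0 < eps) (k : nat)
  (f : {set 'I_k} -> R) (hf : inFk f) (u : 'I_k -> R) :
  Psihat eps u `<=` Psif eps f u.
Proof.
move: hf => [f_sub f_incr f0] v v_hat; split.
  have u_near : supnorm (fun j => clip u j - clip u j) < eps.
    by rewrite supnorm_eq0 // => j; rewrite subrr.
  have [pi [b [lam [_ _ _ [i _ ->]]]]] := Psihat_face_vertex v_hat (norm_clip_le1 u) u_near.
  exact: face_vertex_Vset.
move=> U [[p [[p_ge0 p_sum1] ->]] [a a_min a_near]].
have clip_min u' : Lexp f (clip a) p <= Lexp f u' p.
  exact: le_trans (Lexp_clip_le a f_incr p_ge0) (a_min u').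
have clip_near : supnorm (fun j => clip a j - clip u j) < eps.
  by apply: le_lt_trans a_near; apply: supnorm_le => j; apply: clip_lipschitz.
have [pi [b [lam [lam_ge0 lam_sum1 aE [i lam_i ->]]]]] :=
  Psihat_face_vertex v_hat (norm_clip_le1 a) clip_near.
have comb_le := Lexp_face_le pi b f_sub f0 p_ge0 lam_ge0 lam_sum1.
rewrite -aE in comb_le.
move=> u'; rewrite (convex_comb_le_lb lam_ge0 lam_sum1 (fun i => clip_min _) comb_le lam_i).
exact: clip_min.
Qed.
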